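(* Let $M$ be a connected, oriented, complete hyperbolic three-manifold with universal cover $\tilde M\cong\mathbb{H}^3$, let $\omega$ be a closed one-form on $M$ with lift $\tilde\omega$ to $\tilde M$, and let $b\in\tilde M$. Let $D$ be an ideal view, i.e. the set of outward unit normals to a horosphere $H\subset\tilde M$ (pointing away from the ideal centre of $H$). Identify $H=\pi(D)$ isometrically with $\mathbb{C}$ and write $z_D\in D$ for the normal vector based at the point corresponding to $z\in\mathbb{C}$. Let $d$ be a real number and let $E=\varphi_d(D)$ (again an ideal view), with $\pi(E)$ identified isometrically with $\mathbb{C}$ so that $\varphi_d(z_D)=(e^dz)_E$ for all $z\in\mathbb{C}$. Then for every $R>0$ and every $z\in\mathbb{C}$, \[\Phi^{\omega,b,D}_{R+d}(z_D)=\Phi^{\omega,b,E}_R\big((e^dz)_E\big).\]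
   Context: $\pi\colon \mathrm{UT}\tilde M\to\tilde M$ is the unit tangent bundle projection and $\varphi_t$ is the geodesic flow on $\mathrm{UT}\tilde M$. For a view $D\subset\mathrm{UT}\tilde M$, basepoint $b\in\tilde M$ and $T>0$, the cohomology fractal is $\Phi^{\omega,b,D}_T\colon D\to\mathbb{R}$, $\Phi^{\omega,b,D}_T(v)=\int_0^T\tilde\omega(\varphi_t(v))\,dt+\int_b^{\pi(v)}\tilde\omega$, where a one-form is evaluated on a unit vector $v$ at its basepoint, and the second integral is along any path in $\tilde M$ (well defined since $\tilde\omega$ is closed on the simply connected $\tilde M$). Equivalently $\Phi^{\omega,b,D}_T(v)=W(\pi(\varphi_T(v)))$ where $dW=\tilde\omega$ and $W(b)=0$. *)

(* Hyperboloid model of H^3 inside Minkowski R^{1,3}. *)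
From Stdlib Require Import Reals Lra.
From Coquelicot Require Import Coquelicot.
Open Scope R_scope.

Record R4 := mk4 { c0 : R; c1 : R; c2 : R; c3 : R }.

Definition add4 (a b : R4) : R4 :=
  mk4 (c0 a + c0 b) (c1 a + c1 b) (c2 a + c2 b) (c3 a + c3 b).
Definition scal4 (k : R) (a : R4) : R4 := mk4 (k * c0 a) (k * c1 a) (k * c2 a) (k * c3 a).
Definition sub4 (a b : R4) : R4 := add4 a (scal4 (-1) b).

Definition mink (a b : R4) : R :=
  - c0 a * c0 b + c1 a * c1 b + c2 a * c2 b + c3 a * c3 b.

Definition inH3 (x : R4) : Prop := mink x x = -1 /\ 0 < c0 x.

(* Unit tangent bundle UT H^3: pairs (x,v), x in H^3, v in T_x H^3 = x^perp, <v,v> = 1. *)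
Definition UT := (R4 * R4)%type.
Definition inUT (u : UT) : Prop :=
  inH3 (fst u) /\ mink (fst u) (snd u) = 0 /\ mink (snd u) (snd u) = 1.

Definition proj (u : UT) : R4 := fst u.

Definition geoflow (t : R) (u : UT) : UT :=
  (add4 (scal4 (cosh t) (fst u)) (scal4 (sinh t) (snd u)),
   add4 (scal4 (sinh t) (fst u)) (scal4 (cosh t) (snd u))).

(* Global chart of H^3:  x |-> (x1,x2,x3) in R^3 (inverse y |-> (sqrt(1+|y|^2), y)). *)
Definition R3 := (R * R * R)%type.
Definition chart (x : R4) : R3 := (c1 x, c2 x, c3 x).

Definition add3 (p q : R3) : R3 :=
  let '(a1, a2, a3) := p in let '(b1, b2, b3) := q in (a1 + b1, a2 + b2, a3 + b3).
Definition scal3 (k : R) (p : R3) : R3 :=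
  let '(a1, a2, a3) := p in (k * a1, k * a2, k * a3).
Definition dot3 (p q : R3) : R :=
  let '(a1, a2, a3) := p in let '(b1, b2, b3) := q in a1 * b1 + a2 * b2 + a3 * b3.
Definition e3 (i : nat) : R3 :=
  match i with 0%nat => (1, 0, 0) | 1%nat => (0, 1, 0) | _ => (0, 0, 1) end.

Definition partial3 (i : nat) (f : R3 -> R) (p : R3) : R :=
  Derive (fun s => f (add3 p (scal3 s (e3 i)))) 0.

Fixpoint Ck3 (k : nat) (f : R3 -> R) : Prop :=
  match k with
  | O => forall p, continuous f p
  | S k' => (forall p, continuous f p) /\
            forall i, (i < 3)%nat ->
              (forall p, ex_derive (fun s => f (add3 p (scal3 s (e3 i)))) 0) /\
              Ck3 k' (partial3 i f)
  end.
Definition smooth3 (f : R3 -> R) : Prop := forall k, Ck3 k f.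

(* A one-form on H^3, in the global chart: alpha = a1 dy1 + a2 dy2 + a3 dy3. *)
Definition oneform := ((R3 -> R) * (R3 -> R) * (R3 -> R))%type.
Definition ofcomp (a : oneform) (i : nat) : R3 -> R :=
  let '(a1, a2, a3) := a in match i with 0%nat => a1 | 1%nat => a2 | _ => a3 end.
Definition ofval (a : oneform) (p : R3) : R3 :=
  (ofcomp a 0 p, ofcomp a 1 p, ofcomp a 2 p).

Definition closed_oneform (a : oneform) : Prop :=
  (forall i, (i < 3)%nat -> smooth3 (ofcomp a i)) /\
  forall i j, (i < 3)%nat -> (j < 3)%nat -> forall p,
    partial3 i (ofcomp a j) p = partial3 j (ofcomp a i) p.

(* evaluation of a one-form on a (unit) tangent vector at its basepoint:
   the tangent vector v at x pushes forward under the chart to (v1,v2,v3). *)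
Definition eval_form (a : oneform) (u : UT) : R :=
  dot3 (ofval a (chart (fst u))) (chart (snd u)).

(* int_b^x omega~, along the path that is a straight segment in the chart
   (path-independent, as omega~ is closed on simply connected H^3). *)
Definition path_int (a : oneform) (b x : R4) : R :=
  RInt (fun s => dot3 (ofval a (add3 (chart b) (scal3 s (add3 (chart x) (scal3 (-1) (chart b))))))
                      (add3 (chart x) (scal3 (-1) (chart b)))) 0 1.

(* cohomology fractal Phi^{omega,b,D}_T(v); it does not depend on D except as domain. *)
Definition cohom_fractal (a : oneform) (b : R4) (T : R) (u : UT) : R :=
  RInt (fun t => eval_form a (geoflow t u)) 0 T + path_int a b (proj u).

(* Ideal points = future light-like rays; a horosphere is {x in H^3 | <x,l> = -1}
   for a (unique) future null vector l; its ideal centre is the ray of l. *)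
Definition future_null (l : R4) : Prop := mink l l = 0 /\ 0 < c0 l.
Definition horosphere (l : R4) (x : R4) : Prop := inH3 x /\ mink x l = -1.

(* The ideal view D: outward unit normals to the horosphere, pointing away from
   the ideal centre, i.e. v in T_x H^3, <v,v>=1, v orthogonal to T_x H
   (= {w | <w,x> = 0, <w,l> = 0}), and -<x,l> (= e^{-dist to centre} up to
   a constant) increasing in direction v. *)
Definition ideal_view (l : R4) (u : UT) : Prop :=
  horosphere l (fst u) /\ inUT u /\
  (forall w, mink w (fst u) = 0 -> mink w l = 0 -> mink (snd u) w = 0) /\
  mink (snd u) l < 0.

(* the normal vector of the ideal view of l based at x (this is x - l) *)
Definition horo_normal (l x : R4) : UT := (x, sub4 x l).

(* an isometric identification of C with the horosphere of l:
   a smooth bijection iota : C -> H whose differential carries the standard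
   orthonormal frame of C = R^2 to an orthonormal frame (for the induced metric) *)
Definition comp4 (i : nat) (x : R4) : R :=
  match i with 0%nat => c0 x | 1%nat => c1 x | 2%nat => c2 x | _ => c3 x end.

Fixpoint Ck2 (k : nat) (f : C -> R) : Prop :=
  match k with
  | O => forall p, continuous f p
  | S k' => (forall p, continuous f p) /\
      (forall p : C, ex_derive (fun s => f (fst p + s, snd p)) 0) /\
      (forall p : C, ex_derive (fun s => f (fst p, snd p + s)) 0) /\
      Ck2 k' (fun p => Derive (fun s => f (fst p + s, snd p)) 0) /\
      Ck2 k' (fun p => Derive (fun s => f (fst p, snd p + s)) 0)
  end.

Definition dre (iota : C -> R4) (z : C) : R4 :=
  mk4 (Derive (fun s => c0 (iota (fst z + s, snd z))) 0)
      (Derive (fun s => c1 (iota (fst z + s, snd z))) 0)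
      (Derive (fun s => c2 (iota (fst z + s, snd z))) 0)
      (Derive (fun s => c3 (iota (fst z + s, snd z))) 0).
Definition dim (iota : C -> R4) (z : C) : R4 :=
  mk4 (Derive (fun s => c0 (iota (fst z, snd z + s))) 0)
      (Derive (fun s => c1 (iota (fst z, snd z + s))) 0)
      (Derive (fun s => c2 (iota (fst z, snd z + s))) 0)
      (Derive (fun s => c3 (iota (fst z, snd z + s))) 0).

Definition horo_isometry (l : R4) (iota : C -> R4) : Prop :=
  (forall i k, Ck2 k (fun z => comp4 i (iota z))) /\
  (forall z, horosphere l (iota z)) /\
  (forall z w, iota z = iota w -> z = w) /\
  (forall x, horosphere l x -> exists z, iota z = x) /\
  (forall z, mink (dre iota z) (dre iota z) = 1 /\
             mink (dim iota z) (dim iota z) = 1 /\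
             mink (dre iota z) (dim iota z) = 0).

(* The cohomology fractal is a primitive read off at the endpoint of a geodesic:
   Phi_T(v) = W(pi(phi_T v)), where W is the primitive of the closed form obtained
   by integrating it along straight segments of the chart starting at b.  Indeed,
   along any C^1 curve gamma, (W o gamma)' = omega(gamma'): differentiating under
   the integral sign, closedness turns the derivative of the integrand into an
   exact derivative in the segment parameter (the Poincare lemma), and the
   multivariable chain rule applies because continuous partial derivatives make
   the components of omega Frechet differentiable.  The fundamental theorem of
   calculus then gives Phi_T(v) = W(pi(phi_T v)), and the theorem follows from
   phi_R o phi_d = phi_(R+d) and phi_d(z_D) = (e^d z)_E; no further property of
   the ideal views is needed. *)

From Stdlib Require Import Reals Lra Lia.
From Coquelicot Require Import Coquelicot.
Open Scope R_scope.

(** * Differential calculus on R^3 *)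

(* Naming this structure lets Coquelicot's generic continuity lemmas be applied to
   R3-valued maps, whose uniform structure it does not infer on its own. *)
Notation R3_NormedModule :=
  (prod_NormedModule R_AbsRing (prod_NormedModule R_AbsRing R_NormedModule R_NormedModule)
     R_NormedModule).

Lemma add3_plus (p q : R3) : add3 p q = plus p q.
Proof. destruct p as [[? ?] ?], q as [[? ?] ?]. reflexivity. Qed.

Lemma scal3_scal k (p : R3) : scal3 k p = scal k p.
Proof. destruct p as [[? ?] ?]. reflexivity. Qed.

Lemma is_derive_eq {K : AbsRing} {V : NormedModule K} (f : K -> V) x l l' :
  is_derive f x l -> l = l' -> is_derive f x l'.
Proof. now intros H <-. Qed.

Lemma is_derive_Rplus (f g : R -> R) x df dg :
  is_derive f x df -> is_derive g x dg -> is_derive (fun y => f y + g y) x (df + dg).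
Proof. intros Hf Hg. apply (is_derive_plus f g x df dg Hf Hg). Qed.

Lemma is_derive_Rmult (f g : R -> R) x df dg :
  is_derive f x df -> is_derive g x dg ->
  is_derive (fun y => f y * g y) x (df * g x + f x * dg).
Proof. intros Hf Hg. apply (is_derive_mult f g x df dg Hf Hg Rmult_comm). Qed.

Lemma is_derive_fst {K : AbsRing} {U V : NormedModule K} (f : K -> U * V) x df :
  is_derive f x df -> is_derive (fun y => fst (f y)) x (fst df).
Proof.
  intros H. eapply filterdiff_ext_lin.
  - apply (filterdiff_comp' f fst x (fun y => scal y df) fst H), filterdiff_linear, is_linear_fst.
  - reflexivity.
Qed.

Lemma is_derive_snd {K : AbsRing} {U V : NormedModule K} (f : K -> U * V) x df :
  is_derive f x df -> is_derive (fun y => snd (f y)) x (snd df).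
Proof.
  intros H. eapply filterdiff_ext_lin.
  - apply (filterdiff_comp' f snd x (fun y => scal y df) snd H), filterdiff_linear, is_linear_snd.
  - reflexivity.
Qed.

Lemma is_derive_pair {K : AbsRing} {U V : NormedModule K} (f : K -> U) (g : K -> V) x df dg :
  is_derive f x df -> is_derive g x dg -> is_derive (fun y => (f y, g y)) x (df, dg).
Proof.
  intros Hf Hg. eapply filterdiff_ext_lin.
  - apply (filterdiff_comp'_2 f g pair x (fun y => scal y df) (fun y => scal y dg) pair Hf Hg).
    apply (filterdiff_ext _ _ _ (fun t => surjective_pairing t)).
    apply filterdiff_ext_lin with (fun t => t); [apply filterdiff_linear, is_linear_id |].
    apply surjective_pairing.
  - reflexivity.
Qed.

Lemma continuous_pair {U V W : UniformSpace} (f : U -> V) (g : U -> W) x :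
  continuous f x -> continuous g x -> continuous (fun y => (f y, g y)) x.
Proof.
  intros Hf Hg. apply (continuous_comp_2 f g pair); auto.
  apply (continuous_ext (fun t => t)); [intros; apply surjective_pairing | apply continuous_id].
Qed.

Lemma continuous_fst_comp {U V W : UniformSpace} (f : U -> V * W) x :
  continuous f x -> continuous (fun y => fst (f y)) x.
Proof.
  intros H. apply (continuous_comp f fst); [exact H | destruct (f x); apply continuous_fst].
Qed.

Lemma continuous_snd_comp {U V W : UniformSpace} (f : U -> V * W) x :
  continuous f x -> continuous (fun y => snd (f y)) x.
Proof.
  intros H. apply (continuous_comp f snd); [exact H | destruct (f x); apply continuous_snd].
Qed.

Lemma is_derive_dot3 (u v : R -> R3) t du dv :
  is_derive u t du -> is_derive v t dv ->
  is_derive (fun t => dot3 (u t) (v t)) t (dot3 du (v t) + dot3 (u t) dv).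
Proof.
  intros Hu Hv.
  apply (is_derive_ext (fun t => fst (fst (u t)) * fst (fst (v t))
                               + snd (fst (u t)) * snd (fst (v t)) + snd (u t) * snd (v t))).
  { intros y. destruct (u y) as [[? ?] ?], (v y) as [[? ?] ?]. reflexivity. }
  pose proof (is_derive_fst _ _ _ (is_derive_fst _ _ _ Hu)) as Hu1.
  pose proof (is_derive_snd _ _ _ (is_derive_fst _ _ _ Hu)) as Hu2.
  pose proof (is_derive_snd _ _ _ Hu) as Hu3.
  pose proof (is_derive_fst _ _ _ (is_derive_fst _ _ _ Hv)) as Hv1.
  pose proof (is_derive_snd _ _ _ (is_derive_fst _ _ _ Hv)) as Hv2.
  pose proof (is_derive_snd _ _ _ Hv) as Hv3.
  eapply is_derive_eq.
  - apply is_derive_Rplus; [apply is_derive_Rplus |]; apply is_derive_Rmult; eassumption.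
  - destruct du as [[? ?] ?], dv as [[? ?] ?], (u t) as [[? ?] ?], (v t) as [[? ?] ?].
    simpl. unfold plus, mult; simpl. ring.
Qed.

Lemma continuous_dot3 {U : UniformSpace} (u v : U -> R3) x :
  continuous u x -> continuous v x -> continuous (fun y => dot3 (u y) (v y)) x.
Proof.
  intros Hu Hv.
  apply (continuous_ext (fun y => fst (fst (u y)) * fst (fst (v y))
                               + snd (fst (u y)) * snd (fst (v y)) + snd (u y) * snd (v y))).
  { intros y. destruct (u y) as [[? ?] ?], (v y) as [[? ?] ?]. reflexivity. }
  pose proof (continuous_fst_comp _ _ (continuous_fst_comp _ _ Hu)) as Hu1.
  pose proof (continuous_snd_comp _ _ (continuous_fst_comp _ _ Hu)) as Hu2.
  pose proof (continuous_snd_comp _ _ Hu) as Hu3.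
  pose proof (continuous_fst_comp _ _ (continuous_fst_comp _ _ Hv)) as Hv1.
  pose proof (continuous_snd_comp _ _ (continuous_fst_comp _ _ Hv)) as Hv2.
  pose proof (continuous_snd_comp _ _ Hv) as Hv3.
  apply (continuous_plus (K := R_AbsRing) (V := R_NormedModule));
    [apply (continuous_plus (K := R_AbsRing) (V := R_NormedModule)) |];
    apply (continuous_mult (K := R_AbsRing)); auto.
Qed.

Definition grad3 (f : R3 -> R) (p : R3) : R3 :=
  (partial3 0 f p, partial3 1 f p, partial3 2 f p).

Lemma Ck3_1_ex_derive f i p : Ck3 1 f -> (i < 3)%nat ->
  ex_derive (fun s => f (add3 p (scal3 s (e3 i)))) 0.
Proof. intros [_ Hf] Hi. apply (Hf i Hi). Qed.

Lemma Ck3_1_continuous_partial f i p : Ck3 1 f -> (i < 3)%nat ->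
  continuous (partial3 i f) p.
Proof. intros [_ Hf] Hi. apply (Hf i Hi). Qed.

Lemma is_derive_partial3 f i p (g : R -> R) x0 :
  ex_derive (fun s => f (add3 p (scal3 s (e3 i)))) 0 ->
  (forall h, g (x0 + h) = f (add3 p (scal3 h (e3 i)))) ->
  is_derive g x0 (partial3 i f p).
Proof.
  intros Hex Hg.
  apply (is_derive_ext (fun x => f (add3 p (scal3 (x - x0) (e3 i))))).
  { intros x. rewrite <- Hg. f_equal. ring. }
  replace (partial3 i f p) with (1 * partial3 i f p) by ring.
  apply (is_derive_comp (fun s => f (add3 p (scal3 s (e3 i)))) (fun x => x - x0)).
  - rewrite Rminus_diag. apply Derive_correct, Hex.
  - auto_derive; auto; ring.
Qed.

Section CoordinateLines.
Variable f : R3 -> R.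
Hypothesis Hf : Ck3 1 f.

Lemma is_derive_coord1 x y z : is_derive (fun x => f (x, y, z)) x (partial3 0 f (x, y, z)).
Proof.
  apply is_derive_partial3; [apply Ck3_1_ex_derive; auto |].
  intros h; simpl; f_equal; f_equal; [f_equal |]; ring.
Qed.

Lemma is_derive_coord2 x y z : is_derive (fun y => f (x, y, z)) y (partial3 1 f (x, y, z)).
Proof.
  apply is_derive_partial3; [apply Ck3_1_ex_derive; auto |].
  intros h; simpl; f_equal; f_equal; [f_equal |]; ring.
Qed.

Lemma is_derive_coord3 x y z : is_derive (fun z => f (x, y, z)) z (partial3 2 f (x, y, z)).
Proof.
  apply is_derive_partial3; [apply Ck3_1_ex_derive; auto |].
  intros h; simpl; f_equal; f_equal; [f_equal |]; ring.
Qed.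

Lemma mean_value3 P1 P2 P3 q1 q2 q3 :
  exists c1 c2 c3,
    Rabs (c1 - P1) <= Rabs (q1 - P1) /\ Rabs (c2 - P2) <= Rabs (q2 - P2) /\
    Rabs (c3 - P3) <= Rabs (q3 - P3) /\
    f (q1, q2, q3) - f (P1, P2, P3) =
      partial3 0 f (c1, q2, q3) * (q1 - P1) + partial3 1 f (P1, c2, q3) * (q2 - P2)
      + partial3 2 f (P1, P2, c3) * (q3 - P3).
Proof.
  destruct (MVT_cor4 (fun x => f (x, q2, q3)) (fun x => partial3 0 f (x, q2, q3)) P1
              (Rabs (q1 - P1)) (fun c _ => is_derive_coord1 c q2 q3) q1 (Rle_refl _))
    as [c1 [E1 B1]].
  destruct (MVT_cor4 (fun y => f (P1, y, q3)) (fun y => partial3 1 f (P1, y, q3)) P2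
              (Rabs (q2 - P2)) (fun c _ => is_derive_coord2 P1 c q3) q2 (Rle_refl _))
    as [c2 [E2 B2]].
  destruct (MVT_cor4 (fun z => f (P1, P2, z)) (fun z => partial3 2 f (P1, P2, z)) P3
              (Rabs (q3 - P3)) (fun c _ => is_derive_coord3 P1 P2 c) q3 (Rle_refl _))
    as [c3 [E3 B3]].
  exists c1, c2, c3. repeat split; auto. lra.
Qed.

End CoordinateLines.

Lemma ball_R3 (P1 P2 P3 q1 q2 q3 eps : R) :
  ball ((P1, P2, P3) : R3) eps (q1, q2, q3) <->
  Rabs (q1 - P1) < eps /\ Rabs (q2 - P2) < eps /\ Rabs (q3 - P3) < eps.
Proof.
  change ((Rabs (q1 - P1) < eps /\ Rabs (q2 - P2) < eps) /\ Rabs (q3 - P3) < eps <->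
          Rabs (q1 - P1) < eps /\ Rabs (q2 - P2) < eps /\ Rabs (q3 - P3) < eps).
  tauto.
Qed.

Lemma Rabs_le_norm_R3 (q1 q2 q3 : R) :
  Rabs q1 <= norm ((q1, q2, q3) : R3) /\ Rabs q2 <= norm ((q1, q2, q3) : R3) /\
  Rabs q3 <= norm ((q1, q2, q3) : R3).
Proof.
  pose proof (norm_le_prod_norm_1 ((q1, q2), q3)) as H12.
  pose proof (norm_le_prod_norm_1 (q1, q2)) as H1.
  pose proof (norm_le_prod_norm_2 (q1, q2)) as H2.
  pose proof (norm_le_prod_norm_2 ((q1, q2), q3)) as H3.
  simpl in *. unfold norm in *; simpl in *. unfold abs in *; simpl in *. lra.
Qed.

Lemma Rabs_dot3_le (g1 g2 g3 : R) (u : R3) :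
  Rabs (dot3 (g1, g2, g3) u) <= (Rabs g1 + Rabs g2 + Rabs g3) * norm u.
Proof.
  destruct u as [[u1 u2] u3]. destruct (Rabs_le_norm_R3 u1 u2 u3) as (H1 & H2 & H3).
  simpl. eapply Rle_trans; [apply Rabs_triang |].
  eapply Rle_trans; [apply Rplus_le_compat_r, Rabs_triang |]. rewrite !Rabs_mult.
  pose proof (Rabs_pos g1). pose proof (Rabs_pos g2). pose proof (Rabs_pos g3). nra.
Qed.

Lemma is_linear_dot3 (g : R3) : is_linear (fun u : R3 => dot3 g u).
Proof.
  destruct g as [[g1 g2] g3]. apply Build_is_linear.
  - intros [[x1 x2] x3] [[y1 y2] y3]. cbn. unfold plus; simpl. ring.
  - intros k [[x1 x2] x3]. cbn. unfold scal; simpl. unfold mult; simpl. ring.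
  - exists (Rabs g1 + Rabs g2 + Rabs g3 + 1). split.
    + pose proof (Rabs_pos g1). pose proof (Rabs_pos g2). pose proof (Rabs_pos g3). lra.
    + intros u. eapply Rle_trans; [apply Rabs_dot3_le |].
      pose proof (norm_ge_0 u). nra.
Qed.

Lemma Rabs_lincomb_sub_le D a0 a1 a2 b0 b1 b2 x y z e n :
  D = a0 * x + a1 * y + a2 * z ->
  Rabs (a0 - b0) < e / 3 -> Rabs (a1 - b1) < e / 3 -> Rabs (a2 - b2) < e / 3 ->
  Rabs x <= n -> Rabs y <= n -> Rabs z <= n ->
  Rabs (D - (b0 * x + b1 * y + b2 * z)) <= e * n.
Proof.
  intros -> H0 H1 H2 Hx Hy Hz.
  replace (_ - _) with ((a0 - b0) * x + (a1 - b1) * y + (a2 - b2) * z) by ring.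
  eapply Rle_trans; [apply Rabs_triang |].
  eapply Rle_trans; [apply Rplus_le_compat_r, Rabs_triang |]. rewrite !Rabs_mult.
  pose proof (Rabs_pos x). pose proof (Rabs_pos y). pose proof (Rabs_pos z).
  pose proof (Rabs_pos (a0 - b0)). pose proof (Rabs_pos (a1 - b1)). pose proof (Rabs_pos (a2 - b2)).
  nra.
Qed.

Lemma filterdiff_Ck3 (f : R3 -> R) P : Ck3 1 f ->
  filterdiff f (locally P) (fun u => dot3 (grad3 f P) u).
Proof.
  intros Hf. split; [apply is_linear_dot3 |].
  intros x Hx. apply is_filter_lim_locally_unique in Hx. subst x.
  intros eps.
  assert (Hpos : 0 < eps / 3) by (pose proof (cond_pos eps); lra).
  assert (Hnear : forall i, (i < 3)%nat ->
            locally P (fun q => Rabs (partial3 i f q - partial3 i f P) < eps / 3)).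
  { intros i Hi. apply (Ck3_1_continuous_partial f i P Hf Hi
      (fun y => Rabs (y - partial3 i f P) < eps / 3)).
    apply (locally_ball (partial3 i f P) (mkposreal _ Hpos)). }
  destruct (@filter_and _ (locally P) _ _ _ (Hnear 0%nat ltac:(lia))
             (@filter_and _ (locally P) _ _ _ (Hnear 1%nat ltac:(lia)) (Hnear 2%nat ltac:(lia))))
    as [del Hdel].
  exists del. intros q Hq.
  destruct P as [[P1 P2] P3], q as [[q1 q2] q3].
  destruct (mean_value3 f Hf P1 P2 P3 q1 q2 q3) as (c1 & c2 & c3 & B1 & B2 & B3 & E).
  apply ball_R3 in Hq as (Hq1 & Hq2 & Hq3).
  destruct (Hdel (c1, q2, q3)) as [A1 _]; [apply ball_R3; repeat split; lra |].
  pose proof (cond_pos del).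
  destruct (Hdel (P1, c2, q3)) as [_ [A2 _]].
  { apply ball_R3; rewrite Rminus_diag, Rabs_R0; repeat split; lra. }
  destruct (Hdel (P1, P2, c3)) as [_ [_ A3]].
  { apply ball_R3; rewrite !Rminus_diag, Rabs_R0; repeat split; lra. }
  destruct (Rabs_le_norm_R3 (q1 - P1) (q2 - P2) (q3 - P3)) as (N1 & N2 & N3).
  exact (Rabs_lincomb_sub_le _ _ _ _ _ _ _ _ _ _ _ _ E A1 A2 A3 N1 N2 N3).
Qed.

Lemma is_derive_comp_Ck3 f (p : R -> R3) t dp : Ck3 1 f -> is_derive p t dp ->
  is_derive (fun t => f (p t)) t (dot3 (grad3 f (p t)) dp).
Proof.
  intros Hf Hp. unfold is_derive.
  eapply filterdiff_ext_lin; [apply (filterdiff_comp' p f t _ _ Hp (filterdiff_Ck3 f (p t) Hf)) |].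
  intros y. destruct dp as [[d1 d2] d3]. cbn. unfold scal; simpl. unfold mult; simpl. ring.
Qed.

Lemma continuous_grad3 {U : UniformSpace} f (p : U -> R3) x : Ck3 1 f -> continuous p x ->
  continuous (fun y => grad3 f (p y)) x.
Proof.
  intros Hf Hp. unfold grad3.
  apply continuous_pair; [apply continuous_pair |];
    apply (continuous_comp p); auto; apply Ck3_1_continuous_partial; auto.
Qed.

(** * The straight-line primitive of a closed one-form *)

Lemma closed_oneform_Ck3 a i : closed_oneform a -> (i < 3)%nat -> Ck3 1 (ofcomp a i).
Proof. intros [Hs _] Hi. apply (Hs i Hi 1%nat). Qed.

Definition dform (a : oneform) (p w : R3) : R3 :=
  (dot3 (grad3 (ofcomp a 0) p) w, dot3 (grad3 (ofcomp a 1) p) w, dot3 (grad3 (ofcomp a 2) p) w).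

Lemma dform_symmetric a p v w : closed_oneform a ->
  dot3 (dform a p v) w = dot3 (dform a p w) v.
Proof.
  intros [_ Hcl]. destruct v as [[v1 v2] v3], w as [[w1 w2] w3]. simpl.
  rewrite (Hcl 1%nat 0%nat), (Hcl 2%nat 0%nat), (Hcl 2%nat 1%nat) by lia. ring.
Qed.

Section ClosedForm.
Variable a : oneform.
Hypothesis Ha : closed_oneform a.

Lemma is_derive_ofval (p : R -> R3) t dp : is_derive p t dp ->
  is_derive (fun t => ofval a (p t)) t (dform a (p t) dp).
Proof.
  intros Hp. unfold ofval.
  apply is_derive_pair; [apply is_derive_pair |];
    apply is_derive_comp_Ck3; auto; apply closed_oneform_Ck3; auto.
Qed.

Lemma continuous_ofval {U : UniformSpace} (p : U -> R3) x : continuous p x ->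
  continuous (fun y => ofval a (p y)) x.
Proof.
  intros Hp. unfold ofval.
  apply continuous_pair; [apply continuous_pair |];
    apply (continuous_comp p); auto; apply closed_oneform_Ck3; auto.
Qed.

Lemma continuous_dform {U : UniformSpace} (p w : U -> R3) x : continuous p x -> continuous w x ->
  continuous (fun y => dform a (p y) (w y)) x.
Proof.
  intros Hp Hw. unfold dform.
  apply continuous_pair; [apply continuous_pair |];
    apply continuous_dot3; auto; apply continuous_grad3; auto; apply closed_oneform_Ck3; auto.
Qed.

End ClosedForm.

Section PathIntegralAlongCurve.
Variable a : oneform.
Hypothesis Ha : closed_oneform a.
Variable b : R4.
Variables x v : R -> R4.
Hypothesis Hx : forall t, is_derive (fun t => chart (x t)) t (chart (v t)).
Hypothesis Hv : forall t, continuous (fun t => chart (v t)) t.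

Let chord t := add3 (chart (x t)) (scal3 (-1) (chart b)).
Let seg t s := add3 (chart b) (scal3 s (chord t)).
Let integrand t s := dot3 (ofval a (seg t s)) (chord t).
Let integrand_dt t s :=
  dot3 (dform a (seg t s) (scal3 s (chart (v t)))) (chord t)
  + dot3 (ofval a (seg t s)) (chart (v t)).

Lemma is_derive_chord t : is_derive chord t (chart (v t)).
Proof.
  apply (is_derive_ext (fun t => plus (chart (x t)) (scal3 (-1) (chart b)))).
  { intros; unfold chord; symmetry; apply add3_plus. }
  eapply is_derive_eq; [apply (is_derive_plus _ _ _ _ _ (Hx t) (is_derive_const _ t)) |].
  apply plus_zero_r.
Qed.

Lemma continuous_chord t : continuous chord t.
Proof. exact (ex_derive_continuous chord t (ex_intro _ _ (is_derive_chord t))). Qed.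

Lemma is_derive_seg_t t s : is_derive (fun t => seg t s) t (scal3 s (chart (v t))).
Proof.
  assert (H : is_derive (fun t => scal s (chord t)) t (scal s (chart (v t)))).
  { unfold is_derive. eapply filterdiff_ext_lin.
    - apply (filterdiff_scal_r_fct s _ _ Rmult_comm (is_derive_chord t)).
    - intros y. rewrite !scal_assoc. f_equal. exact (Rmult_comm s y). }
  apply (is_derive_ext (fun t => plus (chart b) (scal s (chord t)))).
  { intros; unfold seg; rewrite add3_plus, scal3_scal; reflexivity. }
  rewrite scal3_scal.
  eapply is_derive_eq.
  - exact (is_derive_plus _ _ _ _ _ (is_derive_const (chart b) t) H).
  - exact (plus_zero_l _).
Qed.

Lemma is_derive_seg_s t s : is_derive (seg t) s (chord t).
Proof.
  assert (H : is_derive (fun s => scal s (chord t)) s (chord t)).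
  { apply (is_derive_eq _ _ (scal 1 (chord t))); [| exact (scal_one _)].
    exact (is_derive_scal_l (fun s => s) s 1 (chord t) (is_derive_id s)). }
  apply (is_derive_ext (fun s => plus (chart b) (scal s (chord t)))).
  { intros; unfold seg; rewrite add3_plus, scal3_scal; reflexivity. }
  eapply is_derive_eq.
  - exact (is_derive_plus _ _ _ _ _ (is_derive_const (chart b) s) H).
  - exact (plus_zero_l _).
Qed.

Lemma continuous_seg t s : continuous (fun z : R * R => seg (fst z) (snd z)) (t, s).
Proof.
  apply (continuous_ext (fun z : R * R => plus (chart b) (scal (snd z) (chord (fst z))))).
  { intros; unfold seg; rewrite add3_plus, scal3_scal; reflexivity. }
  apply (continuous_plus (V := R3_NormedModule)); [apply continuous_const |].
  apply (continuous_scal (V := R3_NormedModule)); [apply continuous_snd |].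
  apply (continuous_comp fst chord); [apply continuous_fst | apply continuous_chord].
Qed.

Lemma continuous_integrand_dt t s :
  continuous (fun z : R * R => integrand_dt (fst z) (snd z)) (t, s).
Proof.
  pose proof (continuous_seg t s) as Hseg.
  assert (Hv' : continuous (fun z : R * R => chart (v (fst z))) (t, s)).
  { apply (continuous_comp fst (fun t => chart (v t))); [apply continuous_fst | apply Hv]. }
  assert (Hc : continuous (fun z : R * R => chord (fst z)) (t, s)).
  { apply (continuous_comp fst chord); [apply continuous_fst | apply continuous_chord]. }
  unfold integrand_dt.
  apply (continuous_plus (K := R_AbsRing) (V := R_NormedModule)); apply continuous_dot3; auto.
  - apply continuous_dform; auto.
    apply (continuous_ext (fun z : R * R => scal (snd z) (chart (v (fst z))))).
    { intros; symmetry; apply scal3_scal. }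
    apply (continuous_scal (V := R3_NormedModule)); [apply continuous_snd | exact Hv'].
  - apply continuous_ofval; auto.
Qed.

Lemma is_derive_integrand_t t s : is_derive (fun t => integrand t s) t (integrand_dt t s).
Proof.
  apply (is_derive_dot3 (fun t => ofval a (seg t s)) chord).
  - apply (is_derive_ofval a Ha (fun t => seg t s)), is_derive_seg_t.
  - apply is_derive_chord.
Qed.

(* The only use of closedness: the t-derivative of the integrand is an exact
   derivative in the segment parameter s. *)
Lemma is_derive_integrand_dt_primitive t s :
  is_derive (fun s => s * dot3 (ofval a (seg t s)) (chart (v t))) s (integrand_dt t s).
Proof.
  eapply is_derive_eq.
  - apply is_derive_Rmult; [apply is_derive_id |].
    apply (is_derive_dot3 (fun s => ofval a (seg t s)) (fun _ => chart (v t))).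
    + apply (is_derive_ofval a Ha (seg t)), is_derive_seg_s.
    + apply is_derive_const.
  - unfold integrand_dt. rewrite (dform_symmetric a _ (scal3 s _)) by exact Ha.
    destruct (ofval a (seg t s)) as [[? ?] ?], (chart (v t)) as [[? ?] ?].
    simpl. unfold one, zero; simpl. ring.
Qed.

Lemma seg_1 t : seg t 1 = chart (x t).
Proof.
  unfold seg, chord. destruct (chart (x t)) as [[? ?] ?], (chart b) as [[? ?] ?].
  simpl. f_equal; [f_equal |]; ring.
Qed.

Lemma is_RInt_integrand_dt t :
  is_RInt (integrand_dt t) 0 1 (dot3 (ofval a (chart (x t))) (chart (v t))).
Proof.
  replace (dot3 (ofval a (chart (x t))) (chart (v t)))
    with (minus (1 * dot3 (ofval a (seg t 1)) (chart (v t)))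
                (0 * dot3 (ofval a (seg t 0)) (chart (v t)))).
  - apply (is_RInt_derive (fun s => s * dot3 (ofval a (seg t s)) (chart (v t)))).
    + intros s _. apply is_derive_integrand_dt_primitive.
    + intros s _.
      apply (continuous_comp (fun s => (t, s)) (fun z => integrand_dt (fst z) (snd z))).
      * apply continuous_pair; [apply continuous_const | apply continuous_id].
      * apply continuous_integrand_dt.
  - rewrite seg_1. unfold minus, plus, opp; simpl. ring.
Qed.

Lemma is_derive_path_int t :
  is_derive (fun t => path_int a b (x t)) t (eval_form a (x t, v t)).
Proof.
  change (is_derive (fun t => RInt (integrand t) 0 1) t
            (dot3 (ofval a (chart (x t))) (chart (v t)))).
  assert (HD : forall t s, Derive (fun t => integrand t s) t = integrand_dt t s)
    by (intros; apply is_derive_unique, is_derive_integrand_t).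
  rewrite <- (is_RInt_unique _ _ _ _ (is_RInt_integrand_dt t)).
  rewrite <- (RInt_ext (fun s => Derive (fun t => integrand t s) t)) by (intros; apply HD).
  apply is_derive_RInt_param.
  - apply filter_forall. intros y s _. eexists. apply is_derive_integrand_t.
  - intros s _. apply continuity_2d_pt_filterlim. rewrite HD.
    apply (filterlim_ext (fun z => integrand_dt (fst z) (snd z))).
    + intros z. symmetry. apply HD.
    + apply continuous_integrand_dt.
  - apply filter_forall. intros y.
    apply (ex_RInt_continuous (V := R_CompleteNormedModule)). intros s _.
    apply continuous_dot3; [| apply continuous_const].
    apply continuous_ofval; auto.
    exact (ex_derive_continuous (seg y) s (ex_intro _ _ (is_derive_seg_s y s))).
Qed.
End PathIntegralAlongCurve.

(** * The geodesic flow and the cohomology fractal *)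

Lemma cosh_add t d : cosh (t + d) = cosh t * cosh d + sinh t * sinh d.
Proof. unfold cosh, sinh. rewrite Ropp_plus_distr, !exp_plus. field. Qed.

Lemma sinh_add t d : sinh (t + d) = sinh t * cosh d + cosh t * sinh d.
Proof. unfold cosh, sinh. rewrite Ropp_plus_distr, !exp_plus. field. Qed.

Lemma geoflow_add t d u : geoflow t (geoflow d u) = geoflow (t + d) u.
Proof.
  destruct u as [[x0 x1 x2 x3] [v0 v1 v2 v3]]. unfold geoflow, add4, scal4; simpl.
  rewrite cosh_add, sinh_add. f_equal; f_equal; ring.
Qed.

Lemma geoflow_0 u : geoflow 0 u = u.
Proof.
  destruct u as [[x0 x1 x2 x3] [v0 v1 v2 v3]]. unfold geoflow, add4, scal4; simpl.
  rewrite cosh_0, sinh_0. f_equal; f_equal; ring.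
Qed.

Lemma is_derive_cosh_sinh X Y t :
  is_derive (fun t => cosh t * X + sinh t * Y) t (sinh t * X + cosh t * Y).
Proof.
  eapply is_derive_eq.
  - apply is_derive_Rplus; apply is_derive_Rmult; try apply is_derive_const; apply is_derive_Reals.
    + apply derivable_pt_lim_cosh.
    + apply derivable_pt_lim_sinh.
  - unfold zero; simpl. ring.
Qed.

Lemma is_derive_sinh_cosh X Y t :
  is_derive (fun t => sinh t * X + cosh t * Y) t (cosh t * X + sinh t * Y).
Proof.
  apply (is_derive_ext (fun t => cosh t * Y + sinh t * X)); [intros; apply Rplus_comm |].
  apply (is_derive_eq _ _ (sinh t * Y + cosh t * X));
    [apply is_derive_cosh_sinh | apply Rplus_comm].
Qed.

Lemma is_derive_chart_geoflow u t :
  is_derive (fun t => chart (fst (geoflow t u))) t (chart (snd (geoflow t u))).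
Proof.
  cbn. apply is_derive_pair; [apply is_derive_pair |]; apply is_derive_cosh_sinh.
Qed.

Lemma is_derive_chart_geoflow_velocity u t :
  is_derive (fun t => chart (snd (geoflow t u))) t (chart (fst (geoflow t u))).
Proof.
  cbn. apply is_derive_pair; [apply is_derive_pair |]; apply is_derive_sinh_cosh.
Qed.

Lemma cohom_fractal_path_int a b T u : closed_oneform a ->
  cohom_fractal a b T u = path_int a b (proj (geoflow T u)).
Proof.
  intros Ha.
  set (F t := path_int a b (proj (geoflow t u))).
  set (e t := eval_form a (geoflow t u)).
  assert (HF : forall t, is_derive F t (e t)).
  { intros t.
    apply (is_derive_path_int a Ha b (fun t => fst (geoflow t u)) (fun t => snd (geoflow t u))).
    - apply is_derive_chart_geoflow.
    - intros s.
      exact (ex_derive_continuous _ s (ex_intro _ _ (is_derive_chart_geoflow_velocity u s))). }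
  assert (He : forall t, continuous e t).
  { intros t. apply continuous_dot3.
    - apply continuous_ofval; auto.
      exact (ex_derive_continuous _ t (ex_intro _ _ (is_derive_chart_geoflow u t))).
    - exact (ex_derive_continuous _ t (ex_intro _ _ (is_derive_chart_geoflow_velocity u t))). }
  change (RInt e 0 T + path_int a b (proj u) = F T).
  rewrite (is_RInt_unique _ _ _ _ (is_RInt_derive F e 0 T (fun t _ => HF t) (fun t _ => He t))).
  replace (path_int a b (proj u)) with (F 0) by (unfold F; rewrite geoflow_0; reflexivity).
  unfold minus, plus, opp; simpl. ring.
Qed.

Lemma cohom_fractal_geoflow a b T d u : closed_oneform a ->
  cohom_fractal a b (T + d) u = cohom_fractal a b T (geoflow d u).
Proof.
  intros Ha. rewrite !cohom_fractal_path_int by exact Ha. now rewrite geoflow_add.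
Qed.

Theorem lemma9p3
  (a : oneform) (Ha : closed_oneform a)
  (b : R4) (Hb : inH3 b)
  (lD : R4) (HlD : future_null lD) (iotaD : C -> R4) (HiD : horo_isometry lD iotaD)
  (d : R)
  (lE : R4) (HlE : future_null lE)
  (HE : forall u, (exists u0, ideal_view lD u0 /\ u = geoflow d u0) <-> ideal_view lE u)
  (iotaE : C -> R4) (HiE : horo_isometry lE iotaE)
  (Hid : forall z : C,
      geoflow d (horo_normal lD (iotaD z)) =
      horo_normal lE (iotaE (Cmult (RtoC (exp d)) z))) :
  forall (Rr : R) (z : C), 0 < Rr ->
    cohom_fractal a b (Rr + d) (horo_normal lD (iotaD z)) =
    cohom_fractal a b Rr (horo_normal lE (iotaE (Cmult (RtoC (exp d)) z))).
Proof.
  intros Rr z _. rewrite <- Hid. apply cohom_fractal_geoflow, Ha.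
Qed.
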